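(* Let $\mathbf M$ be an ergodic channel on a finite alphabet $\mathcal A$ such that for all distinct $i,j\in\mathcal A$ there exists $\ell\in\mathcal A$ with $\mathbf M_{i,\ell}\neq\mathbf M_{j,\ell}$ (i.e. all rows of $\mathbf M$ are distinct). Then there exists $b_0$ such that for every integer $b\ge b_0$ the reconstruction problem for $T_b$ and $\mathbf M$ is solvable.
   Context: Tree process on a rooted tree with root $\rho$: the root label is drawn from an initial distribution on $\mathcal A$, and each non-root vertex $v$ with parent $v'$ receives label $j$ with probability $\mathbf M_{\sigma_{v'},j}$, independently across edges given parent labels. $T_b$ is the infinite rooted tree in which every vertex has exactly $b$ children. $L_n$ is the set of vertices at distance $n$ from $\rho$ and $\sigma_n=(\sigma_v)_{v\in L_n}$. With $\mathbf P_n^\ell$ the conditional law of $\sigma_n$ given $\sigma_\rho=\ell$ and $D_V(P,Q)=\frac12\sum|P-Q|$, the reconstruction problem is solvable if there exist $i,j$ with $\lim_n D_V(\mathbf P_n^i,\mathbf P_n^j)>0$. *)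

From HB Require Import structures.
From mathcomp Require Import all_boot all_order all_algebra.
From mathcomp Require Import all_classical all_reals all_analysis.
Set Implicit Arguments. Unset Strict Implicit. Unset Printing Implicit Defensive.
Import Order.TTheory GRing.Theory Num.Theory numFieldNormedType.Exports.
Local Open Scope ring_scope.

Definition stochastic {R : realType} {A : finType} (M : A -> A -> R) : Prop :=
  (forall i j, 0 <= M i j) /\ (forall i, \sum_(j : A) M i j = 1).

Fixpoint Mpow {R : realType} {A : finType} (M : A -> A -> R) (k : nat) : A -> A -> R :=
  match k with
  | 0 => fun i j => if i == j then 1 else 0
  | k'.+1 => fun i j => \sum_(l : A) Mpow M k' i l * M l j
  end.

(* Ergodic (irreducible and aperiodic) finite chain = primitive:
   some power of M has all entries positive. *)
Definition ergodic {R : realType} {A : finType} (M : A -> A -> R) : Prop :=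
  stochastic M /\ exists k : nat, forall i j, 0 < Mpow M k.+1 i j.

(* Vertices of T_b at distance n from the root: words of length n over 'I_b;
   the children of v are the words rcons v c, c : 'I_b.
   sigma_n is a configuration {ffun n.-tuple 'I_b -> A}.
   lawL M n l s = P_n^l(s) = P(sigma_n = s | sigma_root = l), computed by
   summing out level n from the level-(n+1) joint law (Markov along levels). *)
Fixpoint lawL {R : realType} {A : finType} (b : nat) (M : A -> A -> R) (n : nat)
  : A -> {ffun n.-tuple 'I_b -> A} -> R :=
  match n return A -> {ffun n.-tuple 'I_b -> A} -> R with
  | 0 => fun l s => if s [tuple] == l then 1 else 0
  | n'.+1 => fun l s =>
      \sum_(t : {ffun n'.-tuple 'I_b -> A})
        @lawL R A b M n' l t *
        \prod_(v : n'.-tuple 'I_b) \prod_(c : 'I_b)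
            M (t v) (s [tuple of rcons v c])
  end.
Arguments lawL {R A} b M n.

Definition DV {R : realType} {T : finType} (P Q : T -> R) : R :=
  2^-1 * \sum_(x : T) `|P x - Q x|.

Definition reconstruction_solvable {R : realType} {A : finType}
  (b : nat) (M : A -> A -> R) : Prop :=
  exists i j : A,
    cvgn (fun n => DV (lawL b M n i) (lawL b M n j)) /\
    0 < limn (fun n => DV (lawL b M n i) (lawL b M n j)).

From mathcomp Require Import all_boot all_order all_algebra.
From mathcomp Require Import all_classical all_reals all_analysis.
From mathcomp Require Import lra ring.
Import Order.TTheory GRing.Theory Num.Theory numFieldNormedType.Exports.
Local Open Scope ring_scope.

Set Implicit Arguments. Unset Strict Implicit. Unset Printing Implicit Defensive.

(* Estimate the root label by recursive voting: a vertex whose b children carry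
   labels w votes for the row of M that is l1-closest to the empirical
   distribution of w.  If every child label is observed through a kernel K, the
   vote is observed through the kernel [vote_kernel K], so the estimate computed
   from level n has law [iter n vote_kernel id].  Since distinct rows of M are at
   l1-distance >= gam > 0, a Chebyshev bound on the b label counts shows that
   [K y y >= 1 - eps] for all y implies the same for [vote_kernel K], with
   eps = gam / (4 |A|), as soon as b >= |A| / eps^3.  The estimate then returns
   i with probability >= 1 - eps from root i and <= eps from root j, giving
   D_V(P_n^i, P_n^j) >= 1/4 for every n; and D_V is nonincreasing in n, since
   level n+1 is obtained from level n through a Markov kernel. *)

Section Words.
Variable b : nat.

Definition parent n (u : n.+1.-tuple 'I_b) : n.-tuple 'I_b :=
  [tuple of belast (thead u) (behead u)].
Definition last_letter n (u : n.+1.-tuple 'I_b) : 'I_b := last (thead u) (behead u).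

Lemma rcons_parent_last n (u : n.+1.-tuple 'I_b) :
  [tuple of rcons (parent u) (last_letter u)] = u.
Proof. by apply: val_inj; rewrite /= -lastI [in RHS](tuple_eta u). Qed.

Lemma parent_last_rcons n (v : n.-tuple 'I_b) c :
  parent [tuple of rcons v c] = v /\ last_letter [tuple of rcons v c] = c.
Proof.
have /eqP := rcons_parent_last [tuple of rcons v c].
rewrite -val_eqE /= eqseq_rcons => /andP[/eqP pv /eqP ->].
by split => //; apply: val_inj.
Qed.

End Words.

Section Levels.
Variables (R : realType) (A : finType) (b : nat).

Definition of_blocks n (S : {ffun n.-tuple 'I_b -> {ffun 'I_b -> A}}) :
  {ffun n.+1.-tuple 'I_b -> A} := [ffun u => S (parent u) (last_letter u)].

Lemma of_blocks_rcons n S (v : n.-tuple 'I_b) c :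
  @of_blocks n S [tuple of rcons v c] = S v c.
Proof. by rewrite ffunE; case: (parent_last_rcons v c) => -> ->. Qed.

Lemma sum_level_succ n (F : {ffun n.+1.-tuple 'I_b -> A} -> R) :
  \sum_s F s = \sum_S F (@of_blocks n S).
Proof.
rewrite (reindex (@of_blocks n)) //; apply: onW_bij.
exists (fun s : {ffun n.+1.-tuple 'I_b -> A} =>
  [ffun v : n.-tuple 'I_b => [ffun c : 'I_b => s [tuple of rcons v c]]]).
- move=> S; apply/ffunP => v; apply/ffunP => c; rewrite !ffunE.
  by case: (parent_last_rcons v c) => -> ->.
- by move=> s; apply/ffunP => u; rewrite !ffunE rcons_parent_last.
Qed.

Lemma prod_level_succ n (G : n.+1.-tuple 'I_b -> R) :
  \prod_u G u = \prod_(v : n.-tuple 'I_b) \prod_(c : 'I_b) G [tuple of rcons v c].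
Proof.
rewrite pair_big /= (reindex (fun p : n.-tuple 'I_b * 'I_b => [tuple of rcons p.1 p.2])) //.
apply: onW_bij; exists (fun u => (parent u, last_letter u)).
- by case=> v c /=; case: (parent_last_rcons v c) => -> ->.
- by move=> u /=; rewrite rcons_parent_last.
Qed.

Lemma sum_level0 (F : {ffun 0.-tuple 'I_b -> A} -> R) :
  \sum_s F s = \sum_(y : A) F [ffun => y].
Proof.
rewrite (reindex (fun y : A => [ffun => y])) //; apply: onW_bij.
exists (fun s : {ffun 0.-tuple 'I_b -> A} => s [tuple]); first by move=> y; rewrite ffunE.
by move=> s; apply/ffunP => v; rewrite ffunE (tuple0 v).
Qed.

Lemma prod_level0 (G : 0.-tuple 'I_b -> R) : \prod_v G v = G [tuple].
Proof. by rewrite (big_pred1 [tuple]) // => v; rewrite (tuple0 v) /= eqxx. Qed.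

End Levels.

Section Indicators.
Variable R : realType.

Lemma natr_eq_ffun (I : finType) (B : eqType) (f f' : {ffun I -> B}) :
  (f == f')%:R = \prod_i (f i == f' i)%:R :> R.
Proof.
have [->|/eqP ne] := eqVneq f f'; first by rewrite big1 // => i _; rewrite eqxx.
have [i /negPf fi] : exists i, f i != f' i.
  by apply/existsP; apply: contra_notT ne => /existsPn eqf; apply/ffunP => i; apply/eqP/negPn.
by rewrite (bigD1 i) //= fi mul0r.
Qed.

Lemma sum_delta_mulr (T : finType) (x : T) (X : T -> R) :
  \sum_u (x == u)%:R * X u = X x.
Proof.
rewrite (bigD1 x) //= eqxx mul1r big1 ?addr0 // => u ux.
by rewrite eq_sym (negPf ux) mul0r.
Qed.

Lemma sum_ffun_prod_eq1 (I T : finType) (r : T -> R) : \sum_y r y = 1 ->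
  \sum_(w : {ffun I -> T}) \prod_c r (w c) = 1.
Proof.
by move=> r1; rewrite -(bigA_distr_bigA (fun (_ : I) y => r y)) /= big1.
Qed.

End Indicators.

Definition kcomp (R : realType) (A : finType) (M K : A -> A -> R) x z :=
  \sum_u M x u * K u z.

Definition id_kernel (R : realType) (A : finType) (x y : A) : R := (x == y)%:R.

Section Estimator.
Variables (R : realType) (A : finType) (b : nat) (M : A -> A -> R).
Variable psi : {ffun 'I_b -> A} -> A.

Definition noisy_law n (K : A -> A -> R) l (s : {ffun n.-tuple 'I_b -> A}) :=
  \sum_t lawL b M n l t * \prod_v K (t v) (s v).
Arguments noisy_law : clear implicits.

Definition vote_kernel (K : A -> A -> R) x y :=
  \sum_(w : {ffun 'I_b -> A}) (\prod_c kcomp M K x (w c)) * (psi w == y)%:R.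

Definition level_vote n (s : {ffun n.+1.-tuple 'I_b -> A}) : {ffun n.-tuple 'I_b -> A} :=
  [ffun v : n.-tuple 'I_b => psi [ffun c : 'I_b => s [tuple of rcons v c]]].

Fixpoint root_vote n : {ffun n.-tuple 'I_b -> A} -> A :=
  match n with
  | 0 => fun s => s [tuple]
  | n'.+1 => fun s => root_vote (level_vote s)
  end.

Lemma noisy_law_succ n K l s : noisy_law n.+1 K l s =
  \sum_t lawL b M n l t * \prod_(v : n.-tuple 'I_b) \prod_(c : 'I_b)
      kcomp M K (t v) (s [tuple of rcons v c]).
Proof.
rewrite /noisy_law /=; under eq_bigr do rewrite mulr_suml.
rewrite exchange_big /=; apply: eq_bigr => t _.
under eq_bigr do rewrite -mulrA.
rewrite -mulr_sumr sum_level_succ; congr (_ * _).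
transitivity (\sum_(S : {ffun n.-tuple 'I_b -> {ffun 'I_b -> A}})
   \prod_v \prod_c (M (t v) (S v c) * K (S v c) (s [tuple of rcons v c]))).
  apply: eq_bigr => S _; rewrite prod_level_succ -big_split; apply: eq_bigr => v _.
  by rewrite -big_split; apply: eq_bigr => c _; rewrite of_blocks_rcons.
rewrite -(bigA_distr_bigA (fun v (f : {ffun 'I_b -> A}) =>
  \prod_c (M (t v) (f c) * K (f c) (s [tuple of rcons v c])))) /=.
apply: eq_bigr => v _.
by rewrite -(bigA_distr_bigA (fun c y => M (t v) y * K y (s [tuple of rcons v c]))).
Qed.

Lemma sum_noisy_law_vote n K l u :
  \sum_s noisy_law n.+1 K l s * (level_vote s == u)%:R = noisy_law n (vote_kernel K) l u.
Proof.
under eq_bigr do rewrite noisy_law_succ mulr_suml.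
rewrite exchange_big /=; apply: eq_bigr => t _.
under eq_bigr do rewrite -mulrA.
rewrite -mulr_sumr sum_level_succ; congr (_ * _).
transitivity (\sum_(S : {ffun n.-tuple 'I_b -> {ffun 'I_b -> A}})
   \prod_v ((\prod_c kcomp M K (t v) (S v c)) * (psi (S v) == u v)%:R)).
  apply: eq_bigr => S _; rewrite big_split /=; congr (_ * _).
    by apply: eq_bigr => v _; apply: eq_bigr => c _; rewrite of_blocks_rcons.
  rewrite natr_eq_ffun; apply: eq_bigr => v _; rewrite ffunE.
  by congr ((psi _ == _)%:R); apply/ffunP => c; rewrite ffunE of_blocks_rcons.
by rewrite -(bigA_distr_bigA (fun v (f : {ffun 'I_b -> A}) =>
  (\prod_c kcomp M K (t v) (f c)) * (psi f == u v)%:R)).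
Qed.

Lemma sum_noisy_law_root_vote n K l a :
  \sum_s noisy_law n K l s * (root_vote s == a)%:R = iter n vote_kernel K l a.
Proof.
elim: n K => [|n IH] K /=.
  transitivity (\sum_y K l y * (y == a)%:R).
    rewrite sum_level0; apply: eq_bigr => y _; rewrite ffunE; congr (_ * _).
    rewrite /noisy_law sum_level0 (bigD1 l) //= [X in _ + X]big1 ?addr0.
      by rewrite ffunE eqxx mul1r prod_level0 !ffunE.
    by move=> y' /negPf yl; rewrite ffunE yl mul0r.
  by under eq_bigr do rewrite mulrC eq_sym; rewrite sum_delta_mulr.
rewrite -iterS iterSr -IH.
transitivity (\sum_s \sum_u
    noisy_law n.+1 K l s * ((level_vote s == u)%:R * (root_vote u == a)%:R)).
  by apply: eq_bigr => s _; rewrite -mulr_sumr sum_delta_mulr.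
rewrite exchange_big /=; apply: eq_bigr => u _.
by rewrite -sum_noisy_law_vote mulr_suml; apply: eq_bigr => s _; rewrite mulrA.
Qed.

Lemma noisy_law_id n l s : noisy_law n (@id_kernel R A) l s = lawL b M n l s.
Proof.
rewrite /noisy_law /id_kernel; under eq_bigr do rewrite -natr_eq_ffun.
by under eq_bigr do rewrite mulrC eq_sym; rewrite sum_delta_mulr.
Qed.

End Estimator.

Section Stochastic.
Variables (R : realType) (A : finType).
Implicit Types M K : A -> A -> R.

Lemma stochastic_id_kernel : stochastic (@id_kernel R A).
Proof.
split=> [x y|x]; first by rewrite /id_kernel ler0n.
by rewrite /id_kernel; under eq_bigr do rewrite -[_%:R]mulr1; rewrite sum_delta_mulr.
Qed.

Lemma stochastic_add_le1 K y z : stochastic K -> y != z -> K y y + K y z <= 1.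
Proof.
case=> K0 K1 yz; rewrite -(K1 y) (bigD1 y) //= lerD2l (bigD1 z) 1?eq_sym //= lerDl.
exact: sumr_ge0.
Qed.

Lemma stochastic_le1 K y z : stochastic K -> K y z <= 1.
Proof. by case=> K0 K1; rewrite -(K1 y) (bigD1 z) //= lerDl sumr_ge0. Qed.

Lemma stochastic_off_diag_le K (eps : R) y z : stochastic K ->
  (forall x, 1 - eps <= K x x) -> y != z -> K y z <= eps.
Proof. by move=> hK diag /(stochastic_add_le1 hK); have := diag y; lra. Qed.

Lemma stochastic_kcomp M K : stochastic M -> stochastic K -> stochastic (kcomp M K).
Proof.
move=> [M0 M1] [K0 K1]; split=> [x z|x].
  by apply: sumr_ge0 => u _; apply: mulr_ge0.
rewrite /kcomp exchange_big /=.
by under eq_bigr do rewrite -mulr_sumr K1 mulr1; apply: M1.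
Qed.

Lemma kcomp_near_left M K (eps : R) x z : stochastic M -> stochastic K ->
  (forall y, 1 - eps <= K y y) -> `|kcomp M K x z - M x z| <= eps.
Proof.
move=> [M0 M1] hK diag.
have -> : kcomp M K x z - M x z = \sum_u M x u * (K u z - (u == z)%:R).
  rewrite /kcomp; under [RHS]eq_bigr do rewrite mulrBr; rewrite sumrB.
  by congr (_ - _); under eq_bigr do rewrite mulrC eq_sym; rewrite sum_delta_mulr.
apply: le_trans (ler_norm_sum _ _ _) _.
apply: le_trans (_ : \sum_u M x u * eps <= eps); last by rewrite -mulr_suml M1 mul1r.
apply: ler_sum => u _; rewrite normrM (ger0_norm (M0 x u)) ler_wpM2l //.
have [->|uz] := eqVneq u z.
  by have := stochastic_le1 z z hK; have := diag z; rewrite /= ler_norml; lra.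
by rewrite /= subr0 ger0_norm ?(stochastic_off_diag_le hK diag uz) //; case: hK.
Qed.

Lemma stochastic_vote_kernel b (psi : {ffun 'I_b -> A} -> A) M K :
  stochastic M -> stochastic K -> stochastic (vote_kernel M psi K).
Proof.
move=> hM /(stochastic_kcomp hM) [P0 P1]; split=> [x y|x].
  by apply: sumr_ge0 => w _; apply: mulr_ge0 => //; apply: prodr_ge0.
rewrite /vote_kernel exchange_big /= -[RHS](sum_ffun_prod_eq1 'I_b (P1 x)).
apply: eq_bigr => w _; rewrite -mulr_sumr -[RHS]mulr1; congr (_ * _).
by under eq_bigr do rewrite -[_%:R]mulr1; rewrite sum_delta_mulr.
Qed.

Lemma DV_ge_event (T : finType) (P Q : T -> R) (E : pred T) :
  2^-1 * \sum_x (P x - Q x) * (E x)%:R <= DV P Q.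
Proof.
rewrite /DV ler_wpM2l ?invr_ge0 ?ler0n //; apply: ler_sum => x _.
by case: (E x); rewrite ?mulr1 ?mulr0 ?ler_norm.
Qed.

End Stochastic.

Section Monotone.
Variables (R : realType) (A : finType) (b : nat) (M : A -> A -> R).
Hypothesis hM : stochastic M.

Lemma sum_level_transition n (t : {ffun n.-tuple 'I_b -> A}) :
  \sum_(s : {ffun n.+1.-tuple 'I_b -> A})
     \prod_v \prod_c M (t v) (s [tuple of rcons v c]) = 1.
Proof.
rewrite sum_level_succ.
under eq_bigr do (under eq_bigr do under eq_bigr do rewrite of_blocks_rcons).
rewrite -(bigA_distr_bigA (fun v (f : {ffun 'I_b -> A}) => \prod_c M (t v) (f c))) /=.
by rewrite big1 // => v _; apply: sum_ffun_prod_eq1; case: hM.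
Qed.

Lemma DV_lawL_succ_le n i j :
  DV (lawL b M n.+1 i) (lawL b M n.+1 j) <= DV (lawL b M n i) (lawL b M n j).
Proof.
case: hM => M0 _; rewrite /DV ler_wpM2l ?invr_ge0 ?ler0n //=.
set Tr := fun (t : {ffun n.-tuple 'I_b -> A}) (s : {ffun n.+1.-tuple 'I_b -> A}) =>
  \prod_v \prod_c M (t v) (s [tuple of rcons v c]).
have Tr0 t s : 0 <= Tr t s by apply: prodr_ge0 => v _; apply: prodr_ge0.
apply: (@le_trans _ _ (\sum_s \sum_t `|lawL b M n i t - lawL b M n j t| * Tr t s)).
  apply: ler_sum => s _; rewrite -sumrB.
  under eq_bigr do rewrite -mulrBl.
  apply: (le_trans (ler_norm_sum _ _ _)); apply: ler_sum => t _.
  by rewrite normrM (ger0_norm (Tr0 t s)).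
rewrite exchange_big /=; apply: ler_sum => t _.
by rewrite -mulr_sumr sum_level_transition mulr1.
Qed.

Lemma DV_lawL_cvgn_ge i j (c : R) :
  (forall n, c <= DV (lawL b M n i) (lawL b M n j)) ->
  cvgn (fun n => DV (lawL b M n i) (lawL b M n j)) /\
  c <= limn (fun n => DV (lawL b M n i) (lawL b M n j)).
Proof.
move=> lb; have cv : cvgn (fun n => DV (lawL b M n i) (lawL b M n j)).
  apply: nonincreasing_is_cvgn; first by apply/nonincreasing_seqP => n; apply: DV_lawL_succ_le.
  exists 0 => _ [n _ <-]; apply: mulr_ge0; first by rewrite invr_ge0 ler0n.
  by apply: sumr_ge0.
by split=> //; apply: limr_ge => //; apply: nearW.
Qed.

End Monotone.

Section LabelCount.
Variables (R : realType) (A : finType) (b : nat) (r : A -> R).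
Hypotheses (r0 : forall y, 0 <= r y) (r1 : \sum_y r y = 1).

Definition label_count (w : {ffun 'I_b -> A}) z : R := \sum_c (w c == z)%:R.

Variable z : A.
Let Y (y : A) : R := (y == z)%:R - r z.

Let Y_sq_bound y : 0 <= Y y * Y y <= 1.
Proof.
have : -1 <= Y y <= 1.
  rewrite /Y; have := r0 z; have := stochastic_le1 z z (conj (fun _ => r0) (fun _ => r1)).
  by case: (y == z) => /= ? ?; apply/andP; split; lra.
by move: (Y y) => u /andP[? ?]; apply/andP; split; nra.
Qed.

Let covariance_le c c' :
  \sum_(w : {ffun 'I_b -> A}) (\prod_d r (w d)) * (Y (w c) * Y (w c')) <= (c == c')%:R.
Proof.
set Phi := fun d y => (if d == c then Y y else 1) * (if d == c' then Y y else 1).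
have -> : \sum_(w : {ffun 'I_b -> A}) (\prod_d r (w d)) * (Y (w c) * Y (w c'))
    = \prod_d \sum_y r y * Phi d y.
  rewrite (bigA_distr_bigA (fun d y => r y * Phi d y)) /=.
  apply: eq_bigr => w _; rewrite big_split /=; congr (_ * _).
  by rewrite /Phi big_split /= -!big_mkcond !big_pred1_eq.
have [cc'|cc'] := eqVneq c c'.
  have Phi01 d y : 0 <= Phi d y <= 1.
    by rewrite /Phi -cc'; case: (d == c); [exact: Y_sq_bound | rewrite mulr1 ler01 lexx].
  apply: prodr_ile1 => d _; apply/andP; split.
    by apply: sumr_ge0 => y _; apply: mulr_ge0 => //; case/andP: (Phi01 d y).
  rewrite -[X in _ <= X]r1; apply: ler_sum => y _.
  by rewrite ler_piMr //; case/andP: (Phi01 d y).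
(* the factor at [d = c] is the mean of [Y], which vanishes *)
rewrite (bigD1 c) //= [X in X * _](_ : _ = 0) ?mul0r // /Phi eqxx (negPf cc').
under eq_bigr do rewrite mulr1 /Y mulrBr.
rewrite sumrB -mulr_suml r1 mul1r; apply/eqP; rewrite subr_eq0; apply/eqP.
by rewrite (bigD1 z) //= eqxx mulr1 big1 ?addr0 // => y /negPf ->; rewrite mulr0.
Qed.

Lemma label_count_second_moment :
  \sum_(w : {ffun 'I_b -> A}) (\prod_c r (w c)) * (label_count w z - b%:R * r z) ^+ 2
  <= b%:R.
Proof.
have centered w : label_count w z - b%:R * r z = \sum_c Y (w c).
  by rewrite /label_count /Y sumrB sumr_const card_ord mulr_natl.
rewrite (eq_bigr (fun w : {ffun 'I_b -> A} =>
  \sum_(c : 'I_b) \sum_(c' : 'I_b) (\prod_d r (w d)) * (Y (w c) * Y (w c'))));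
  last by move=> w _; rewrite centered expr2 mulr_suml mulr_sumr; apply: eq_bigr => c _;
    rewrite mulr_sumr mulr_sumr.
rewrite exchange_big /=.
apply: (@le_trans _ _ (\sum_(c : 'I_b) \sum_(c' : 'I_b) (c == c')%:R)).
  apply: ler_sum => c _; rewrite exchange_big /=; apply: ler_sum => c' _.
  exact: covariance_le.
rewrite (eq_bigr (fun _ => 1)) ?sumr_const ?card_ord // => c _.
by under eq_bigr do rewrite -[_%:R]mulr1; rewrite sum_delta_mulr.
Qed.

Lemma label_count_deviation (e : R) : 0 < e -> (0 < b)%N ->
  \sum_(w : {ffun 'I_b -> A}) (\prod_c r (w c)) *
     (e * b%:R <= `|label_count w z - b%:R * r z|)%R%:R <= (b%:R * e ^+ 2)^-1.
Proof.
move=> e0 b0; have eb : 0 < e * b%:R by rewrite mulr_gt0 ?ltr0n.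
apply: (@le_trans _ _ (\sum_(w : {ffun 'I_b -> A}) (\prod_c r (w c)) *
     ((label_count w z - b%:R * r z) ^+ 2 / (e * b%:R) ^+ 2))).
  apply: ler_sum => w _; apply: ler_wpM2l; first exact: prodr_ge0.
  have [dev|_] /= := boolP (e * b%:R <= _)%R; last by rewrite divr_ge0 ?sqr_ge0.
  rewrite ler_pdivlMr ?exprn_gt0 // mul1r -[X in _ <= X]real_normK ?num_real //.
  by rewrite !expr2 ler_pM ?(ltW eb).
under eq_bigr do rewrite mulrA.
rewrite -mulr_suml; apply: le_trans (ler_wpM2r _ label_count_second_moment) _.
  by rewrite invr_ge0 sqr_ge0.
have bne : (b%:R : R) != 0 by rewrite pnatr_eq0 -lt0n.
by rewrite le_eqVlt; apply/orP; left; apply/eqP; field; rewrite bne gt_eqF.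
Qed.

End LabelCount.
Arguments label_count {R A b} w z.

Section RowEstimate.
Variables (R : realType) (A : finType) (b : nat) (M : A -> A -> R).
Hypothesis hM : stochastic M.
Variables (d : A) (gam : R).
Hypotheses (gam0 : 0 < gam) (gam1 : gam <= 1).
Hypothesis rows_apart : forall i j, i != j -> gam <= \sum_z `|M i z - M j z|.

Let m : R := #|A|%:R.
Let eps : R := gam / (4 * m).

Let m_ge1 : 1 <= m.
Proof. by rewrite ler1n; apply/card_gt0P; exists d. Qed.

Let eps_gt0 : 0 < eps.
Proof. by rewrite divr_gt0 // mulr_gt0 //; have := m_ge1; lra. Qed.

Definition row_estimate (w : {ffun 'I_b -> A}) : A :=
  odflt d [pick y | \sum_z `|label_count w z / b%:R - M y z| < gam / 2].

Lemma row_estimate_eq w x :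
  (forall z, `|label_count w z / b%:R - M x z| < 2 * eps) -> row_estimate w = x.
Proof.
move=> close.
have near_x : \sum_z `|label_count w z / b%:R - M x z| < gam / 2.
  apply: lt_le_trans (_ : \sum_(z : A) 2 * eps <= gam / 2).
    by apply: ltr_sum => //; apply/hasP; exists x => //; rewrite mem_index_enum.
  rewrite sumr_const -mulr_natr le_eqVlt; apply/orP; left; apply/eqP.
  by rewrite /eps; field; rewrite gt_eqF // (lt_le_trans ltr01 m_ge1).
rewrite /row_estimate; case: pickP => [y near_y|/(_ x)]; last by rewrite near_x.
apply: contraTeq near_y => yx; rewrite -leNgt.
have tri : \sum_z `|M y z - M x z| <= \sum_z `|label_count w z / b%:R - M y z|
    + \sum_z `|label_count w z / b%:R - M x z|.
  rewrite -big_split; apply: ler_sum => z _; rewrite -(distrC (M y z)).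
  by apply: le_trans (ler_normD _ _); rewrite addrA subrK distrC.
by have := rows_apart yx; lra.
Qed.

Lemma row_estimate_miss (r : A -> R) x w : (0 < b)%N ->
  (forall z, `|r z - M x z| <= eps) -> row_estimate w != x ->
  exists z, eps * b%:R <= `|label_count w z - b%:R * r z|.
Proof.
move=> b0 r_near /eqP miss; apply: contrapT => far; apply/miss/row_estimate_eq => z.
have bR : 0 < (b%:R : R) by rewrite ltr0n.
have : `|label_count w z / b%:R - r z| < eps.
  have -> : label_count w z / b%:R - r z = (label_count w z - b%:R * r z) / b%:R.
    by field; rewrite gt_eqF.
  rewrite normrM normfV (ger0_norm (ltW bR)) ltr_pdivrMr // ltNge.
  by apply/negP => dev; apply: far; exists z.
have := ler_normD (label_count w z / b%:R - r z) (r z - M x z).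
by rewrite addrA subrK; have := r_near z; lra.
Qed.

Lemma vote_kernel_diag_ge K : stochastic K -> (forall y, 1 - eps <= K y y) ->
  (0 < b)%N -> m / (b%:R * eps ^+ 2) <= eps ->
  forall x, 1 - eps <= vote_kernel M row_estimate K x x.
Proof.
move=> hK diag b0 b_large x; set r := kcomp M K x.
have [r0 r1] := stochastic_kcomp hM hK.
have P0 w : 0 <= \prod_c r (w c) by apply: prodr_ge0 => c _; apply: r0.
have miss : 1 - vote_kernel M row_estimate K x x =
    \sum_(w : {ffun 'I_b -> A}) (\prod_c r (w c)) * (row_estimate w != x)%:R.
  rewrite /vote_kernel -[X in X - _](sum_ffun_prod_eq1 'I_b (r1 x)) -sumrB.
  apply: eq_bigr => w _; rewrite -{1}[\prod_c _]mulr1 -mulrBr.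
  by case: eqP; rewrite ?subrr ?subr0.
have union w : (row_estimate w != x)%:R <=
    \sum_z (eps * b%:R <= `|label_count w z - b%:R * r z|)%R%:R :> R.
  have [_|/(row_estimate_miss b0 (fun z => kcomp_near_left x z hM hK diag))[z dev]] :=
    eqVneq (row_estimate w) x; first exact: sumr_ge0.
  by rewrite (bigD1 z) //= dev lerDl sumr_ge0.
rewrite lerBlDr -lerBlDl miss.
apply: le_trans (_ : \sum_(w : {ffun 'I_b -> A}) (\prod_c r (w c)) *
    \sum_z (eps * b%:R <= `|label_count w z - b%:R * r z|)%R%:R <= _).
  by apply: ler_sum => w _; apply: ler_wpM2l.
under eq_bigr do rewrite mulr_sumr; rewrite exchange_big /=.
apply: le_trans (_ : \sum_(z : A) (b%:R * eps ^+ 2)^-1 <= _).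
  by apply: ler_sum => z _; apply: label_count_deviation (r0 x) (r1 x) _ _ eps_gt0 b0.
by rewrite sumr_const -[_ *+ #|_|]mulr_natl.
Qed.

Lemma iter_vote_kernel_diag_ge n K : stochastic K -> (forall y, 1 - eps <= K y y) ->
  (0 < b)%N -> m / (b%:R * eps ^+ 2) <= eps ->
  stochastic (iter n (vote_kernel M row_estimate) K) /\
  (forall y, 1 - eps <= iter n (vote_kernel M row_estimate) K y y).
Proof.
move=> hK diag b0 b_large; elim: n => [|n [IHs IHd]] //=.
split; first exact: stochastic_vote_kernel.
exact: vote_kernel_diag_ge.
Qed.

Lemma DV_lawL_ge i j n : i != j -> (0 < b)%N -> m / (b%:R * eps ^+ 2) <= eps ->
  1 / 4 <= DV (lawL b M n i) (lawL b M n j).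
Proof.
move=> ij b0 b_large.
have id_diag (y : A) : 1 - eps <= id_kernel R y y.
  by rewrite /id_kernel eqxx /=; have := eps_gt0; lra.
have [hK diag] := iter_vote_kernel_diag_ge n (stochastic_id_kernel R A) id_diag b0 b_large.
set K := iter n _ _ in hK diag.
have estimate l : \sum_s lawL b M n l s * (root_vote row_estimate s == i)%:R = K l i.
  by rewrite /K -sum_noisy_law_root_vote; apply: eq_bigr => s _; rewrite noisy_law_id.
have := DV_ge_event (lawL b M n i) (lawL b M n j) (fun s => root_vote row_estimate s == i).
under eq_bigr do rewrite mulrBl; rewrite sumrB !estimate.
have ji : j != i by rewrite eq_sym.
have := stochastic_off_diag_le hK diag ji.
have : eps <= 1 / 4.
  have m1 := m_ge1; rewrite /eps ler_pdivrMr; last by rewrite mulr_gt0 //; lra.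
  by rewrite mulrA mul1r mulVf ?pnatr_eq0 // mul1r (le_trans gam1 m1).
by have := diag i; lra.
Qed.

End RowEstimate.

Lemma distinct_rows_apart (R : realType) (A : finType) (M : A -> A -> R) :
  (forall i j, i != j -> exists l, M i l != M j l) ->
  exists gam : R, [/\ 0 < gam, gam <= 1 &
    forall i j, i != j -> gam <= \sum_z `|M i z - M j z|].
Proof.
move=> distinct; pose dist (p : A * A) := \sum_z `|M p.1 z - M p.2 z|.
exists (\big[Num.min/1]_(p | p.1 != p.2) dist p); split.
- apply/bigmin_gtP; split=> // -[i j] /= /distinct [l Ml].
  apply: lt_le_trans (_ : `|M i l - M j l| <= _); first by rewrite normr_gt0 subr_eq0.
  by rewrite /dist (bigD1 l) //= lerDl sumr_ge0.
- exact: bigmin_le_id.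
- by move=> i j ij; apply: (bigmin_le_cond 1 dist (_ : (i, j).1 != (i, j).2)).
Qed.

Lemma nat_large_div_le (R : realType) (c e : R) : 0 < e ->
  exists b0, forall b, (b0 <= b)%N -> (0 < b)%N /\ c / (b%:R * e ^+ 2) <= e.
Proof.
move=> e0; exists (Num.truncn (c / e ^+ 3)).+1 => b b0b; split; first exact: leq_trans b0b.
have bR : 0 < (b%:R : R) by rewrite ltr0n (leq_trans _ b0b).
rewrite ler_pdivrMr ?mulr_gt0 ?exprn_gt0 // mulrCA -exprS.
rewrite -ler_pdivrMr ?exprn_gt0 //; apply/ltW/(lt_le_trans (truncnS_gt _)).
by rewrite ler_nat.
Qed.

Theorem theorem6p1 (R : realType) (A : finType) (M : A -> A -> R) :
  (1 < #|A|)%N ->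
  ergodic M ->
  (forall i j : A, i != j -> exists l : A, M i l != M j l) ->
  exists b0 : nat, forall b : nat, (b0 <= b)%N -> reconstruction_solvable b M.
Proof.
(* only the stochasticity part of ergodicity is needed *)
move=> /card_gt1P[i [j [_ _ ij]]] [hM _] /distinct_rows_apart[gam [gam0 gam1 apart]].
have eps0 : 0 < gam / (4 * #|A|%:R) :> R.
  by rewrite divr_gt0 // mulr_gt0 // ltr0n; apply/card_gt0P; exists i.
have [b0 large] := nat_large_div_le #|A|%:R eps0.
exists b0 => b /large[b_pos b_large]; exists i, j.
have [cv lim_ge] :=
  DV_lawL_cvgn_ge hM (fun n => DV_lawL_ge hM i gam0 gam1 apart n ij b_pos b_large).
by split=> //; apply: lt_le_trans lim_ge; lra.
Qed.
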